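(* Let $R$ be a commutative ring with identity, $S$ a multiplicative subset of $R$, and let $0\rightarrow A\xrightarrow{f} B\xrightarrow{f'} C\rightarrow 0$ be a short $u$-$S$-exact sequence of $R$-modules. Then the following are equivalent: (1) $0\rightarrow A\xrightarrow{f} B\xrightarrow{f'} C\rightarrow 0$ is $u$-$S$-pure; (2) there exists $s\in S$ such that whenever a system of equations $f(a_i)=\sum_{j=1}^m r_{ij}x_j$ $(i=1,\dots,n)$, with $a_i\in A$, $r_{ij}\in R$ and unknowns $x_1,\dots,x_m$, has a solution in $B$, the system $sa_i=\sum_{j=1}^m r_{ij}x_j$ $(i=1,\dots,n)$ has a solution in $A$; (3) there exists $s\in S$ such that for every finitely generated free $R$-module $F$, every finitely generated submodule $K$ of $F$ with inclusion $i:K\to F$, and all $R$-homomorphisms $\alpha:K\to A$, $\beta:F\to B$ with $f\alpha=\beta i$, there exists an $R$-homomorphism $\eta:F\to A$ with $s\alpha=\eta i$; (4) there exists $s\in S$ such that for every finitely presented $R$-module $N$, the induced sequence $0\rightarrow\mathrm{Hom}_R(N,A)\rightarrow \mathrm{Hom}_R(N,B)\rightarrow \mathrm{Hom}_R(N,C)\rightarrow 0$ is $u$-$S$-exact with respect to $s$.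
   Context: A multiplicative subset $S$ of $R$ satisfies $1\in S$ and $s_1s_2\in S$ for $s_1,s_2\in S$. A sequence $X\xrightarrow{u}Y\xrightarrow{v}Z$ is $u$-$S$-exact at $Y$ with respect to $s\in S$ if $s\,\mathrm{Ker}(v)\subseteq\mathrm{Im}(u)$ and $s\,\mathrm{Im}(u)\subseteq\mathrm{Ker}(v)$. A short sequence $0\to X\to Y\to Z\to 0$ is (short) $u$-$S$-exact (with respect to $s$) if it is $u$-$S$-exact at each of $X,Y,Z$ with respect to some (resp. the given) $s\in S$. A short $u$-$S$-exact sequence $0\rightarrow A\rightarrow B\rightarrow C\rightarrow 0$ is called $u$-$S$-pure if for every $R$-module $M$ the induced sequence $0\rightarrow M\otimes_RA\rightarrow M\otimes_RB\rightarrow M\otimes_RC\rightarrow 0$ is $u$-$S$-exact. *)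

From HB Require Import structures.
From mathcomp Require Import all_boot all_order all_algebra.
Set Implicit Arguments. Unset Strict Implicit. Unset Printing Implicit Defensive.
Import GRing.Theory.
Local Open Scope ring_scope.

Definition mult_subset (R : comPzRingType) (S : {pred R}) : Prop :=
  1 \in S /\ (forall s t, s \in S -> t \in S -> s * t \in S).

Definition uS_exact_at (R : comPzRingType) (s : R) (X Y Z : lmodType R)
  (u : X -> Y) (v : Y -> Z) : Prop :=
  (forall y, v y = 0 -> exists x, u x = s *: y) /\
  (forall x, v (s *: u x) = 0).

(* 0 -> A --f--> B --g--> C -> 0 is u-S-exact w.r.t. s (exactness at A, B, C,
   with the conditions involving the zero maps written out). *)
Definition short_uS_exact_wrt (R : comPzRingType) (s : R) (A B C : lmodType R)
  (f : A -> B) (g : B -> C) : Prop :=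
  (forall a, f a = 0 -> s *: a = 0) /\
  uS_exact_at s f g /\
  (forall c, exists b, g b = s *: c).

(* ---------- Tensor products M (x)_R A ----------
   An element of M (x)_R A is represented by a finite formal sum
   sum_k m_k (x) a_k, i.e. a list of pairs; [tens_eq] is the congruence
   generated by the defining relations of the tensor product
   (bilinearity, balancedness, commutativity of +, zero).  The quotient
   of (seq (M * A), ++) by [tens_eq] is exactly M (x)_R A. *)
Inductive tens_eq (R : comPzRingType) (M A : lmodType R) :
    seq (M * A) -> seq (M * A) -> Prop :=
| te_refl t : tens_eq t t
| te_sym t t' : tens_eq t t' -> tens_eq t' t
| te_trans t1 t2 t3 : tens_eq t1 t2 -> tens_eq t2 t3 -> tens_eq t1 t3
| te_cat t1 t1' t2 t2' : tens_eq t1 t1' -> tens_eq t2 t2' ->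
    tens_eq (t1 ++ t2) (t1' ++ t2')
| te_comm t1 t2 : tens_eq (t1 ++ t2) (t2 ++ t1)
| te_addl (m m' : M) (a : A) : tens_eq [:: (m + m', a)] [:: (m, a); (m', a)]
| te_addr (m : M) (a a' : A) : tens_eq [:: (m, a + a')] [:: (m, a); (m, a')]
| te_bal (r : R) (m : M) (a : A) : tens_eq [:: (r *: m, a)] [:: (m, r *: a)]
| te_zero (a : A) : tens_eq [:: (0 : M, a)] [::].

Definition tens_map (R : comPzRingType) (M A B : lmodType R) (g : A -> B)
  (t : seq (M * A)) : seq (M * B) := map (fun p => (p.1, g p.2)) t.

Definition tens_scale (R : comPzRingType) (M A : lmodType R) (r : R)
  (t : seq (M * A)) : seq (M * A) := map (fun p => (r *: p.1, p.2)) t.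

Definition tens_short_uS_exact_wrt (R : comPzRingType) (s : R)
  (M A B C : lmodType R) (f : A -> B) (g : B -> C) : Prop :=
  (forall u : seq (M * A), tens_eq (tens_map f u) [::] ->
       tens_eq (tens_scale s u) [::]) /\
  (forall t : seq (M * B), tens_eq (tens_map g t) [::] ->
       exists u : seq (M * A), tens_eq (tens_map f u) (tens_scale s t)) /\
  (forall u : seq (M * A),
       tens_eq (tens_map g (tens_scale s (tens_map f u))) [::]) /\
  (forall w : seq (M * C), exists t : seq (M * B),
       tens_eq (tens_map g t) (tens_scale s w)).

Definition uS_pure (R : comPzRingType) (S : {pred R}) (A B C : lmodType R)
  (f : A -> B) (g : B -> C) : Prop :=
  forall M : lmodType R, exists2 s, s \in S & tens_short_uS_exact_wrt s M f g.

Definition fin_generated (R : comPzRingType) (K : lmodType R) : Prop :=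
  exists n (e : 'I_n -> K),
    forall x, exists c : 'I_n -> R, x = \sum_(i < n) c i *: e i.

Definition fg_free (R : comPzRingType) (F : lmodType R) : Prop :=
  exists n (e : 'I_n -> F),
    (forall x, exists c : 'I_n -> R, x = \sum_(i < n) c i *: e i) /\
    (forall c : 'I_n -> R, \sum_(i < n) c i *: e i = 0 -> forall i, c i = 0).

Definition fin_presented (R : comPzRingType) (N : lmodType R) : Prop :=
  exists n (g : 'I_n -> N),
    (forall x, exists c : 'I_n -> R, x = \sum_(i < n) c i *: g i) /\
    exists k (rel : 'I_k -> 'I_n -> R),
      (forall l, \sum_(i < n) rel l i *: g i = 0) /\
      (forall c : 'I_n -> R, \sum_(i < n) c i *: g i = 0 ->
         exists d : 'I_k -> R, forall i, c i = \sum_(l < k) d l * rel l i).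

(* Condition (2) is the hub; each implication multiplies the constant by a
   power of the constant s0 of the u-S-exact sequence, so it stays in S.
   (2) -> (1): if (id ⊗ f) u vanishes in M ⊗ B, this is witnessed by finitely
   many linear relations among finitely many elements of B, since the kernel
   of M^(B) -> M ⊗ B is spanned by the elements m ⊗ (Σ r_i b_i) with
   Σ r_i b_i = 0.  Together with the elements f a occurring in u they form a
   system solvable in B, and a solution in A of the s-scaled system shows
   that s u vanishes in M ⊗ A.
   (1) -> (2): purity only gives a constant depending on M, so it is applied
   once to a universal module in which, for every coefficient matrix, the
   columns of the matrix become relations among unit vectors; a system
   solvable in B then produces a tensor killed by id ⊗ f.
   (2) <-> (3) <-> (4): a system of equations is the same as a linear map out
   of the cokernel of its coefficient matrix, and maps out of a finitely
   presented (or finitely generated free) module are given on generators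
   subject to finitely many relations, i.e. by a system. *)

From HB Require Import structures.
From mathcomp Require Import all_boot all_order all_algebra.
From mathcomp Require Import boolp functions ring.
Import GRing.Theory.
Local Open Scope ring_scope.
Local Open Scope quotient_scope.
Set Implicit Arguments. Unset Strict Implicit. Unset Printing Implicit Defensive.

Definition linear_of (R : comPzRingType) (U V : lmodType R) (h : U -> V)
  (hP : forall a x y, h (a *: x + y) = a *: h x + h y) : {linear U -> V} :=
  HB.pack h (GRing.isLinear.Build R U V *:%R h hP).

Lemma scalerAC (R : comPzRingType) (V : lmodType R) a b (v : V) :
  a *: (b *: v) = b *: (a *: v).
Proof. by rewrite !scalerA mulrC. Qed.

Lemma sum_group_by (I X : eqType) (V : nmodType) (Y : seq X) (r : seq I) (key : I -> X)
  (G : I -> V) : uniq Y -> (forall i, i \in r -> key i \in Y) ->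
  \sum_(i <- r) G i = \sum_(y <- Y) \sum_(i <- r | key i == y) G i.
Proof.
move=> uY rY; under [RHS]eq_bigr do rewrite big_mkcond.
rewrite exchange_big; apply: eq_big_seq => i ir /=.
rewrite (bigD1_seq (key i)) ?rY //= eqxx big1 ?addr0 // => y /negbTE yi.
by rewrite eq_sym yi.
Qed.

Lemma sum_collect_coef (R : comPzRingType) (X : eqType) (V : lmodType R) (Y : seq X)
  (ws : seq (R * X)) (z : X -> V) : uniq Y -> (forall w, w \in ws -> w.2 \in Y) ->
  \sum_(y <- Y) (\sum_(w <- ws | w.2 == y) w.1) *: z y = \sum_(w <- ws) w.1 *: z w.2.
Proof.
move=> uY wsY; rewrite [RHS](sum_group_by _ uY wsY); apply: eq_bigr => y _.
by rewrite scaler_suml; apply: eq_bigr => w /eqP ->.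
Qed.

Lemma sum_val_eq (V : nmodType) n (F : 'I_n -> V) k :
  \sum_(i < n) (if val i == k then F i else 0) = if insub k is Some i then F i else 0.
Proof.
case: insubP => [i0 _ <- | kn].
  by rewrite (bigD1 i0) //= eqxx big1 ?addr0 // => i /negbTE; rewrite (inj_eq val_inj) => ->.
by apply: big1 => i _; case: eqP => // ik; move: kn; rewrite -ik ltn_ord.
Qed.

(** * Submodules and quotient modules *)

Section PropQuotient.
Variables (T : choiceType) (E : T -> T -> Prop).
Hypotheses (E_refl : forall x, E x x) (E_sym : forall x y, E x y -> E y x)
  (E_trans : forall x y z, E x y -> E y z -> E x z).

Definition prop_rel : rel T := fun x y => `[< E x y >].

Lemma prop_rel_refl : reflexive prop_rel.
Proof. by move=> x; apply/asboolP. Qed.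

Lemma prop_rel_sym : symmetric prop_rel.
Proof. by move=> x y; apply/asboolP/asboolP; apply: E_sym. Qed.

Lemma prop_rel_trans : transitive prop_rel.
Proof. by move=> y x z /asboolP Exy /asboolP Eyz; apply/asboolP; apply: E_trans Eyz. Qed.

Canonical prop_equiv := EquivRel prop_rel prop_rel_refl prop_rel_sym prop_rel_trans.

Definition pquot := {eq_quot prop_equiv}.

Lemma pquot_eqP x y : \pi_pquot x = \pi_pquot y <-> E x y.
Proof. by split=> [/eqquotP/asboolP | /(asboolP (E x y))/(@eqquotP _ _ pquot x y)]. Qed.

Lemma pquot_repr x : E (repr (\pi_pquot x)) x.
Proof. by apply/pquot_eqP; rewrite reprK. Qed.

End PropQuotient.

Record submodule (R : comPzRingType) (V : lmodType R) := Submodule {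
  in_submod :> V -> Prop;
  submod0 : in_submod 0;
  submodD x y : in_submod x -> in_submod y -> in_submod (x + y);
  submodZ r x : in_submod x -> in_submod (r *: x) }.

Section Submodule.
Variables (R : comPzRingType) (V : lmodType R) (U : submodule V).

Lemma submodN x : U x -> U (- x).
Proof. by rewrite -scaleN1r; apply: submodZ. Qed.

Lemma submodB x y : U x -> U y -> U (x - y).
Proof. by move=> Ux /submodN; apply: submodD. Qed.

Lemma submod_sum I (r : seq I) (F : I -> V) : (forall i, U (F i)) -> U (\sum_(i <- r) F i).
Proof.
move=> UF; elim: r => [|i r IHr]; first by rewrite big_nil; apply: submod0.
by rewrite big_cons; apply: submodD.
Qed.

End Submodule.

Section SpanKernelImage.
Variables (R : comPzRingType) (V W : lmodType R).

Section Span.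
Variables (I : eqType) (ok : I -> Prop) (gen : I -> V).

Definition spanned (v : V) := exists2 l : seq (R * I),
  (forall p, p \in l -> ok p.2) & v = \sum_(p <- l) p.1 *: gen p.2.

Lemma spanned0 : spanned 0.
Proof. by exists [::]; rewrite ?big_nil. Qed.

Lemma spannedD v v' : spanned v -> spanned v' -> spanned (v + v').
Proof.
move=> [l okl ->] [l' okl' ->]; exists (l ++ l'); last by rewrite big_cat.
by move=> p; rewrite mem_cat => /orP[/okl | /okl'].
Qed.

Lemma spannedZ r v : spanned v -> spanned (r *: v).
Proof.
move=> [l okl ->]; exists [seq (r * p.1, p.2) | p <- l].
  by move=> _ /mapP[p /okl okp ->].
by rewrite big_map scaler_sumr; apply: eq_bigr => p _; rewrite scalerA.
Qed.

Definition span_submod := Submodule spanned0 spannedD spannedZ.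

Lemma spanned_gen r i : ok i -> spanned (r *: gen i).
Proof. by move=> oki; exists [:: (r, i)]; rewrite ?big_seq1 // => p; rewrite inE => /eqP ->. Qed.

End Span.

Variable h : {linear V -> W}.

Lemma kerD x y : h x = 0 -> h y = 0 -> h (x + y) = 0.
Proof. by rewrite linearD => -> ->; rewrite addr0. Qed.

Lemma kerZ r x : h x = 0 -> h (r *: x) = 0.
Proof. by rewrite linearZ_LR => ->; rewrite scaler0. Qed.

Definition ker_submod := Submodule (linear0 h) kerD kerZ.

Lemma image0 : exists x, 0 = h x.
Proof. by exists 0; rewrite linear0. Qed.

Lemma imageD y y' : (exists x, y = h x) -> (exists x, y' = h x) -> exists x, y + y' = h x.
Proof. by move=> [x ->] [x' ->]; exists (x + x'); rewrite linearD. Qed.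

Lemma imageZ r y : (exists x, y = h x) -> exists x, r *: y = h x.
Proof. by move=> [x ->]; exists (r *: x); rewrite linearZ_LR. Qed.

Definition image_submod := Submodule image0 imageD imageZ.

End SpanKernelImage.

Section QuotientModule.
Variables (R : comPzRingType) (V : lmodType R) (U : submodule V).

Definition modeq (x y : V) := U (x - y).

Lemma modeq_refl x : modeq x x.
Proof. by rewrite /modeq subrr; apply: submod0. Qed.

Lemma modeq_sym x y : modeq x y -> modeq y x.
Proof. by move=> Uxy; rewrite /modeq -opprB; apply: submodN. Qed.

Lemma modeq_trans x y z : modeq x y -> modeq y z -> modeq x z.
Proof. by rewrite /modeq -[x - z](subrKA y); apply: submodD. Qed.

Definition quotmod := pquot modeq_refl modeq_sym modeq_trans.
HB.instance Definition _ := Choice.on quotmod.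

Local Notation pi := (\pi_quotmod : V -> quotmod).

Lemma pi_eqP x y : pi x = pi y <-> U (x - y).
Proof. exact: (pquot_eqP modeq_refl modeq_sym modeq_trans). Qed.

Lemma pi_repr x : U (x - repr (pi x)).
Proof. exact/modeq_sym/(pquot_repr modeq_refl modeq_sym modeq_trans). Qed.

Lemma pi_reprK (q : quotmod) : pi (repr q) = q.
Proof. exact: reprK. Qed.

Definition quot_add (q q' : quotmod) : quotmod := pi (repr q + repr q').
Definition quot_opp (q : quotmod) : quotmod := pi (- repr q).
Definition quot_scale r (q : quotmod) : quotmod := pi (r *: repr q).

Lemma piD x y : pi (x + y) = quot_add (pi x) (pi y).
Proof.
by apply/pi_eqP; rewrite opprD addrACA; apply: submodD; apply: pi_repr.
Qed.

Lemma piN x : pi (- x) = quot_opp (pi x).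
Proof. by apply/pi_eqP; rewrite -opprD; apply/submodN/pi_repr. Qed.

Lemma piZ r x : pi (r *: x) = quot_scale r (pi x).
Proof. by apply/pi_eqP; rewrite -scalerBr; apply/submodZ/pi_repr. Qed.

Lemma quot_addA : associative quot_add.
Proof. by move=> q1 q2 q3; rewrite -[q1]pi_reprK -[q2]pi_reprK -[q3]pi_reprK -!piD addrA. Qed.

Lemma quot_addC : commutative quot_add.
Proof. by move=> q q'; rewrite -[q]pi_reprK -[q']pi_reprK -!piD addrC. Qed.

Lemma quot_add0 : left_id (pi 0) quot_add.
Proof. by move=> q; rewrite -[q]pi_reprK -piD add0r. Qed.

Lemma quot_addN : left_inverse (pi 0) quot_opp quot_add.
Proof. by move=> q; rewrite -[q]pi_reprK -piN -piD addNr. Qed.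

HB.instance Definition _ :=
  GRing.isZmodule.Build quotmod quot_addA quot_addC quot_add0 quot_addN.

Lemma quot_scaleA a b (q : quotmod) : quot_scale a (quot_scale b q) = quot_scale (a * b) q.
Proof. by rewrite -[q]pi_reprK -!piZ scalerA. Qed.

Lemma quot_scale1 : left_id 1 quot_scale.
Proof. by move=> q; rewrite -[q]pi_reprK -piZ scale1r. Qed.

Lemma quot_scaleDr : right_distributive quot_scale +%R.
Proof.
by move=> a q q'; rewrite -[q]pi_reprK -[q']pi_reprK /GRing.add /= -piD -!piZ -piD scalerDr.
Qed.

Lemma quot_scaleDl (q : quotmod) : {morph quot_scale^~ q : a b / a + b}.
Proof. by move=> a b; rewrite -[q]pi_reprK /GRing.add /= -!piZ -piD scalerDl. Qed.

HB.instance Definition _ := GRing.Zmodule_isLmodule.Build R quotmod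
  quot_scaleA quot_scale1 quot_scaleDr quot_scaleDl.

Lemma pi_is_linear a x y : pi (a *: x + y) = a *: pi x + pi y.
Proof. by rewrite piD piZ. Qed.

Definition quot_proj : {linear V -> quotmod} := linear_of pi_is_linear.

Lemma quot_proj_repr q : quot_proj (repr q) = q.
Proof. exact: reprK. Qed.

Lemma quot_proj_eqP x y : quot_proj x = quot_proj y <-> U (x - y).
Proof. exact: pi_eqP. Qed.

Lemma quot_proj_eq0 x : quot_proj x = 0 <-> U x.
Proof. by rewrite -(linear0 quot_proj) quot_proj_eqP subr0. Qed.

Lemma quot_proj_repr_sub x q : quot_proj x = q -> U (repr q - x).
Proof. by move<-; rewrite -opprB; apply/submodN/pi_repr. Qed.

Lemma quot_lift (W : lmodType R) (g : {linear V -> W}) :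
  (forall x, U x -> g x = 0) ->
  exists gq : {linear quotmod -> W}, forall x, gq (quot_proj x) = g x.
Proof.
move=> gU.
have g_repr x : g (repr (pi x)) = g x.
  by apply/eqP; rewrite eq_sym -subr_eq0 -linearB gU //; apply: pi_repr.
have gq_lin a (q q' : quotmod) : g (repr (a *: q + q')) = a *: g (repr q) + g (repr q').
  by rewrite -[q]reprK -[q']reprK -[a *: _ + _]pi_is_linear !g_repr linearP.
by exists (linear_of gq_lin) => x; apply: g_repr.
Qed.

End QuotientModule.

Lemma quot_ker_lift (R : comPzRingType) (V W : lmodType R) (h : {linear V -> W}) :
  exists hq : {linear quotmod (ker_submod h) -> W},
    injective hq /\ forall x, hq (quot_proj _ x) = h x.
Proof.
have [hq hqE] := @quot_lift _ _ (ker_submod h) _ h (fun x hx => hx).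
exists hq; split=> // q q'; rewrite -[q]quot_proj_repr -[q']quot_proj_repr !hqE => e.
by apply/quot_proj_eqP; rewrite /= linearB e subrr.
Qed.

(** * Finitely presented modules *)

Lemma linear_lincomb (R : comPzRingType) (U W : lmodType R) (h : {linear U -> W})
  n (c : 'I_n -> R) (u : 'I_n -> U) :
  h (\sum_(i < n) c i *: u i) = \sum_(i < n) c i *: h (u i).
Proof. by rewrite linear_sum; apply: eq_bigr => i _; rewrite linearZ_LR. Qed.

Section RowCombination.
Variables (R : comPzRingType) (W : lmodType R) (n : nat) (v : 'I_n -> W).

Lemma row_comb_is_linear a (c c' : 'rV[R]_n) :
  \sum_i (a *: c + c') 0 i *: v i =
    a *: \sum_i c 0 i *: v i + \sum_i c' 0 i *: v i.
Proof.
rewrite scaler_sumr -big_split; apply: eq_bigr => i _.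
by rewrite !mxE scalerDl scalerA.
Qed.

Definition row_comb : {linear 'rV[R]_n -> W} := linear_of row_comb_is_linear.

Lemma row_combE c : row_comb c = \sum_i c 0 i *: v i.
Proof. by []. Qed.

Lemma row_comb_delta i : row_comb (delta_mx 0 i) = v i.
Proof.
rewrite row_combE (bigD1 i) //= mxE !eqxx scale1r big1 ?addr0 // => j /negbTE ji.
by rewrite mxE ji andbF scale0r.
Qed.

End RowCombination.

Lemma row_combZ (R : comPzRingType) (W : lmodType R) n (v : 'I_n -> W) t c :
  row_comb (fun i => t *: v i) c = t *: row_comb v c.
Proof. by rewrite !row_combE scaler_sumr; apply: eq_bigr => i _; rewrite scalerAC. Qed.

Lemma row_comb_mulmx (R : comPzRingType) (W : lmodType R) n m (v : 'I_n -> W)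
  (Rm : 'M[R]_(m, n)) (c : 'rV[R]_m) :
  row_comb v (c *m Rm) = row_comb (fun i => \sum_j Rm i j *: v j) c.
Proof.
rewrite !row_combE; under eq_bigr do rewrite mxE scaler_suml.
rewrite exchange_big; apply: eq_bigr => i _; rewrite scaler_sumr.
by apply: eq_bigr => j _; rewrite scalerA.
Qed.

Lemma delta_mulmx (R : comPzRingType) n m (Rm : 'M[R]_(n, m)) i :
  delta_mx 0 i *m Rm = \sum_j Rm i j *: delta_mx (0 : 'I_1) j.
Proof. by rewrite -rowE [LHS]row_sum_delta; apply: eq_bigr => j _; rewrite mxE. Qed.

Lemma quot_rV_span (R : comPzRingType) n (U : submodule 'rV[R]_n) (q : quotmod U) :
  q = \sum_j repr q 0 j *: quot_proj U (delta_mx 0 j).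
Proof. by rewrite -linear_lincomb -row_sum_delta quot_proj_repr. Qed.

Lemma fin_generated_quot_rV (R : comPzRingType) n (U : submodule 'rV[R]_n) :
  fin_generated (quotmod U).
Proof.
by exists n, (fun j => quot_proj U (delta_mx 0 j)) => q; exists (repr q 0); apply: quot_rV_span.
Qed.

Lemma fg_free_rV (R : comPzRingType) n : fg_free 'rV[R]_n.
Proof.
exists n, (delta_mx 0); split=> [u | c c0 i]; first by exists (u 0); apply: row_sum_delta.
have : \row_j c j = 0 :> 'rV[R]_n.
  by rewrite [LHS]row_sum_delta -[RHS]c0; apply: eq_bigr => j _; rewrite mxE.
by move/(congr1 (fun u : 'rV_n => u 0 i)); rewrite !mxE.
Qed.

Lemma sum_delta_scale (R : comPzRingType) (W : lmodType R) n (z : 'I_n -> W) i :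
  \sum_(j < n) (i == j)%:R *: z j = z i.
Proof.
rewrite (bigD1 i) //= eqxx scale1r big1 ?addr0 // => j /negbTE ji.
by rewrite eq_sym ji scale0r.
Qed.

Section FinitePresentationLift.
Variables (R : comPzRingType) (N W : lmodType R) (n k : nat) (gam : 'I_n -> N)
  (rel : 'I_k -> 'I_n -> R).
Hypotheses (gam_span : forall x, exists c : 'I_n -> R, x = \sum_(i < n) c i *: gam i)
  (rel_span : forall c : 'I_n -> R, \sum_(i < n) c i *: gam i = 0 ->
     exists d : 'I_k -> R, forall i, c i = \sum_(l < k) d l * rel l i).

Lemma presentation_lift (z : 'I_n -> W) :
  (forall l, \sum_(i < n) rel l i *: z i = 0) ->
  exists h : {linear N -> W}, forall i, h (gam i) = z i.
Proof.
move=> z_rel.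
have comb_wd c c' : \sum_i c i *: gam i = \sum_i c' i *: gam i ->
    \sum_i c i *: z i = \sum_i c' i *: z i.
  move=> /eqP; rewrite -subr_eq0 -sumrB => /eqP cc'.
  have [d dE] : exists d : 'I_k -> R, forall i, c i - c' i = \sum_(l < k) d l * rel l i.
    by apply: rel_span; rewrite -[RHS]cc'; apply: eq_bigr => i _; rewrite scalerBl.
  apply/eqP; rewrite -subr_eq0 -sumrB.
  under eq_bigr do rewrite -scalerBl dE scaler_suml.
  rewrite exchange_big big1 //= => l _.
  by under eq_bigr do rewrite -scalerA; rewrite -scaler_sumr z_rel scaler0.
have [coef coefP] := choice gam_span.
pose h x := \sum_i coef x i *: z i.
have h_lin a x y : h (a *: x + y) = a *: h x + h y.
  rewrite /h scaler_sumr -big_split /=.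
  rewrite (comb_wd _ (fun i => a * coef x i + coef y i)); last first.
    rewrite -coefP {1}(coefP x) {1}(coefP y) scaler_sumr -big_split /=.
    by apply: eq_bigr => i _; rewrite scalerDl scalerA.
  by apply: eq_bigr => i _; rewrite scalerDl scalerA.
exists (linear_of h_lin) => i; rewrite -[RHS]sum_delta_scale; apply: comb_wd.
by rewrite -coefP sum_delta_scale.
Qed.

End FinitePresentationLift.

Lemma free_lift (R : comPzRingType) (F W : lmodType R) n (e : 'I_n -> F) :
  (forall x, exists c : 'I_n -> R, x = \sum_(i < n) c i *: e i) ->
  (forall c : 'I_n -> R, \sum_(i < n) c i *: e i = 0 -> forall i, c i = 0) ->
  forall z : 'I_n -> W, exists h : {linear F -> W}, forall i, h (e i) = z i.
Proof.
move=> e_span e_free z.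
apply: (@presentation_lift _ _ _ _ 0 e (fun _ _ => 0)) => // [c /e_free c0 | []//].
by exists (fun _ => 0) => i; rewrite c0 big_ord0.
Qed.

Section Cokernel.
Variables (R : comPzRingType) (n m : nat) (Rm : 'M[R]_(n, m)).

Definition coker := quotmod (image_submod (mulmxr Rm : {linear 'rV[R]_n -> 'rV[R]_m})).

Definition coker_proj : {linear 'rV[R]_m -> coker} := quot_proj _.

Definition coker_gen (j : 'I_m) : coker := coker_proj (delta_mx 0 j).

Lemma coker_rel i : \sum_j Rm i j *: coker_gen j = 0.
Proof.
by rewrite -linear_lincomb; apply/quot_proj_eq0; exists (delta_mx 0 i); rewrite /= delta_mulmx.
Qed.

Lemma fin_presented_coker : fin_presented coker.
Proof.
exists m, coker_gen; split=> [x | ]; first by exists (repr x 0); apply: quot_rV_span.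
exists n, (fun i j => Rm i j); split=> [i | c]; first exact: coker_rel.
have -> : \sum_j c j *: coker_gen j = coker_proj (\row_j c j).
  by rewrite (row_sum_delta (\row_j c j)) linear_lincomb; apply: eq_bigr => j _; rewrite mxE.
move/quot_proj_eq0 => [d /= dE]; exists (fun i => d 0 i) => j.
by have := congr1 (fun u : 'rV_m => u 0 j) dE; rewrite !mxE.
Qed.

End Cokernel.

(** * Tensor products *)

Section Tensor.
Variables (R : comPzRingType) (M A : lmodType R).
Local Notation te := (@tens_eq R M A).

Definition tens_opp (t : seq (M * A)) := [seq (- p.1, p.2) | p <- t].

Lemma tens_eq_oppK t : te (tens_opp t ++ t) [::].
Proof.
elim: t => [|[m a] t IHt] /=; first exact: te_refl.
have -> : (- m, a) :: tens_opp t ++ (m, a) :: t =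
    [:: (- m, a)] ++ ((tens_opp t ++ [:: (m, a)]) ++ t) by rewrite -catA.
apply: te_trans (te_cat (te_refl _) (te_cat (te_comm _ _) (te_refl _))) _.
have cancel_m : te [:: (- m, a); (m, a)] [::].
  by apply: te_trans (te_sym (te_addl _ _ _)) _; rewrite addNr; apply: te_zero.
exact: (te_cat cancel_m IHt).
Qed.

Definition tensor := pquot (@te_refl R M A) (@te_sym R M A) (@te_trans R M A).
HB.instance Definition _ := Choice.on tensor.

Definition tsum (t : seq (M * A)) : tensor := \pi t.

Lemma tsum_eqP t t' : tsum t = tsum t' <-> te t t'.
Proof. exact: pquot_eqP. Qed.

Lemma tsum_repr (q : tensor) : tsum (repr q) = q.
Proof. exact: reprK. Qed.

Definition tens_add (q q' : tensor) := tsum (repr q ++ repr q').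
Definition tens_neg (q : tensor) := tsum (tens_opp (repr q)).

Lemma tsum_cat_add t t' : tsum (t ++ t') = tens_add (tsum t) (tsum t').
Proof. by apply/tsum_eqP; apply: te_cat; apply: te_sym; apply: pquot_repr. Qed.

Lemma tens_addA : associative tens_add.
Proof.
by move=> q1 q2 q3; rewrite -[q1]tsum_repr -[q2]tsum_repr -[q3]tsum_repr -!tsum_cat_add catA.
Qed.

Lemma tens_addC : commutative tens_add.
Proof. by move=> q q'; apply/tsum_eqP/te_comm. Qed.

Lemma tens_add0 : left_id (tsum [::]) tens_add.
Proof. by move=> q; rewrite -[q]tsum_repr -tsum_cat_add. Qed.

Lemma tens_addN : left_inverse (tsum [::]) tens_neg tens_add.
Proof.
move=> q; apply/tsum_eqP.
apply: te_trans (te_cat (pquot_repr _ _ _ _) (te_refl _)) _; exact: tens_eq_oppK.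
Qed.

HB.instance Definition _ :=
  GRing.isZmodule.Build tensor tens_addA tens_addC tens_add0 tens_addN.

Definition tmul (m : M) (a : A) : tensor := tsum [:: (m, a)].

Lemma tsum_nil : tsum [::] = 0. Proof. by []. Qed.

Lemma tsum_cat t t' : tsum (t ++ t') = tsum t + tsum t'.
Proof. exact: tsum_cat_add. Qed.

Lemma tsumE t : tsum t = \sum_(p <- t) tmul p.1 p.2.
Proof.
elim: t => [|[m a] t IHt]; first by rewrite big_nil.
by rewrite big_cons -IHt /tmul -tsum_cat.
Qed.

Lemma tmul0l a : tmul 0 a = 0.
Proof. exact/tsum_eqP/te_zero. Qed.

Lemma tmulDl m m' a : tmul (m + m') a = tmul m a + tmul m' a.
Proof. by rewrite -tsum_cat; apply/tsum_eqP/te_addl. Qed.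

Lemma tmulDr m a a' : tmul m (a + a') = tmul m a + tmul m a'.
Proof. by rewrite -tsum_cat; apply/tsum_eqP/te_addr. Qed.

Lemma tmulZ r m a : tmul (r *: m) a = tmul m (r *: a).
Proof. exact/tsum_eqP/te_bal. Qed.

Lemma tmul0r m : tmul m 0 = 0.
Proof. by rewrite -(scale0r (0 : A)) -tmulZ scale0r tmul0l. Qed.

Lemma tmulNr m a : tmul m (- a) = - tmul m a.
Proof. by apply/eqP; rewrite -subr_eq0 opprK -tmulDr addNr tmul0r. Qed.

Lemma tmulBr m a a' : tmul m (a - a') = tmul m a - tmul m a'.
Proof. by rewrite tmulDr tmulNr. Qed.

Lemma tmul_suml I (r : seq I) (P : pred I) (F : I -> M) a :
  tmul (\sum_(i <- r | P i) F i) a = \sum_(i <- r | P i) tmul (F i) a.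
Proof. exact: (big_morph (fun m => tmul m a) (fun m m' => tmulDl m m' a) (tmul0l a)). Qed.

Lemma tmul_sumr I (r : seq I) (P : pred I) (F : I -> A) m :
  tmul m (\sum_(i <- r | P i) F i) = \sum_(i <- r | P i) tmul m (F i).
Proof. exact: (big_morph (tmul m) (tmulDr m) (tmul0r m)). Qed.

Lemma tens_eq_scale r t t' : te t t' -> te (tens_scale r t) (tens_scale r t').
Proof.
elim=> {t t'} /=; rewrite /tens_scale ?map_cat.
- by move=> t; apply: te_refl.
- by move=> t t' _; apply: te_sym.
- by move=> t1 t2 t3 _ h12 _; apply: te_trans h12.
- by move=> t1 t1' t2 t2' _ h1 _ h2; rewrite !map_cat; apply: te_cat.
- by move=> t1 t2; rewrite !map_cat; apply: te_comm.
- by move=> m m' a /=; rewrite scalerDr; apply: te_addl.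
- by move=> m a a' /=; apply: te_addr.
- by move=> r' m a /=; rewrite scalerA mulrC -scalerA; apply: te_bal.
- by move=> a /=; rewrite scaler0; apply: te_zero.
Qed.

Lemma tens_scaleA r r' (t : seq (M * A)) :
  tens_scale r (tens_scale r' t) = tens_scale (r * r') t.
Proof. by rewrite /tens_scale -map_comp; apply: eq_map => p /=; rewrite scalerA. Qed.

End Tensor.

Lemma tens_map_scale (R : comPzRingType) (M A B : lmodType R) (g : A -> B) r
  (t : seq (M * A)) : tens_map g (tens_scale r t) = tens_scale r (tens_map g t).
Proof. by rewrite /tens_map /tens_scale -!map_comp. Qed.

Section TensorInvariant.
Variables (R : comPzRingType) (M A Z : lmodType R) (U : submodule Z) (phi : M -> A -> Z).
Hypotheses (phiDl : forall m m' a, U (phi (m + m') a - (phi m a + phi m' a)))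
  (phiDr : forall m a a', U (phi m (a + a') - (phi m a + phi m a')))
  (phiZ : forall r m a, U (phi (r *: m) a - phi m (r *: a)))
  (phi0 : forall a, U (phi 0 a)).

Lemma tens_eq_invariant t t' : tens_eq t t' ->
  U (\sum_(p <- t) phi p.1 p.2 - \sum_(p <- t') phi p.1 p.2).
Proof.
elim=> {t t'} [t | t t' _ Utt' | t1 t2 t3 _ U12 _ U23 | t1 t1' t2 t2' _ U1 _ U2 | t1 t2
  | m m' a | m a a' | r m a | a]; rewrite ?big_cat ?big_cons ?big_nil ?addr0 /=.
- by rewrite subrr; apply: submod0.
- by rewrite -opprB; apply: submodN.
- by rewrite -(subrKA (\sum_(p <- t2) phi p.1 p.2)); apply: submodD.
- by rewrite opprD addrACA; apply: submodD.
- by rewrite addrC subrr; apply: submod0.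
- exact: phiDl.
- exact: phiDr.
- exact: phiZ.
- by rewrite subr0.
Qed.

Lemma tens_eq0_invariant t : tens_eq t [::] -> U (\sum_(p <- t) phi p.1 p.2).
Proof. by move/tens_eq_invariant; rewrite big_nil subr0. Qed.

End TensorInvariant.

Section FormalSums.
Variables (R : comPzRingType) (M X : lmodType R).

Definition single (x : X) (m : M) : X -> M := fun y => if x == y then m else 0.

(* [formal t] reads the formal sum [t] in the direct sum M^(X) of copies of M;
   [relations] is the kernel of M^(X) -> M ⊗ X. *)
Definition formal (t : seq (M * X)) : X -> M := \sum_(p <- t) single p.2 p.1.

Definition relation_vec (q : M * seq (R * X)) : X -> M :=
  formal [seq (w.1 *: q.1, w.2) | w <- q.2].

Definition is_relation (q : M * seq (R * X)) := \sum_(w <- q.2) w.1 *: w.2 = 0.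

Definition relations := span_submod is_relation relation_vec.

Lemma single0 x : single x 0 = 0.
Proof. by apply/funext => y; rewrite /single if_same. Qed.

Lemma singleD x m m' : single x (m + m') = single x m + single x m'.
Proof. by apply/funext => y; rewrite /single !fctE; case: (x == y); rewrite ?addr0. Qed.

Lemma singleN x m : single x (- m) = - single x m.
Proof. by apply/funext => y; rewrite /single !fctE; case: (x == y); rewrite ?oppr0. Qed.

Lemma formalE t y : formal t y = \sum_(p <- t | p.2 == y) p.1.
Proof. by rewrite /formal fct_sumE [RHS]big_mkcond. Qed.

Lemma formal_relations t : tens_eq t [::] -> relations (formal t).
Proof.
apply: (tens_eq0_invariant (phi := fun m x => single x m)) => [m m' x | m x x' | r m x | x].
- by rewrite singleD subrr; apply: submod0.
- have rel : is_relation (m, [:: (1, x + x'); (-1, x); (-1, x')]).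
    by rewrite /is_relation !big_cons big_nil /= scale1r !scaleN1r addr0 -opprD subrr.
  have -> : single (x + x') m - (single x m + single x' m) =
      1 *: relation_vec (m, [:: (1, x + x'); (-1, x); (-1, x')]).
    by rewrite /relation_vec /formal !big_cons big_nil /= !scale1r addr0 !scaleN1r !singleN opprD.
  exact: spanned_gen.
- have rel : is_relation (m, [:: (r, x); (-1, r *: x)]).
    by rewrite /is_relation !big_cons big_nil /= scaleN1r addr0 subrr.
  have -> : single x (r *: m) - single (r *: x) m =
      1 *: relation_vec (m, [:: (r, x); (-1, r *: x)]).
    by rewrite /relation_vec /formal !big_cons big_nil /= scale1r addr0 scaleN1r singleN.
  exact: spanned_gen.
- by rewrite single0; apply: submod0.
Qed.

End FormalSums.

Section FormalEvaluation.
Variables (R : comPzRingType) (M X A : lmodType R).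

Lemma sum_tmul_formal (Y : seq X) (z : X -> A) (t : seq (M * X)) :
  uniq Y -> (forall p, p \in t -> p.2 \in Y) ->
  \sum_(y <- Y) tmul (formal t y) (z y) = \sum_(p <- t) tmul p.1 (z p.2).
Proof.
move=> uY tY; rewrite (sum_group_by _ uY tY); apply: eq_bigr => y _.
by rewrite formalE tmul_suml; apply: eq_bigr => p /eqP ->.
Qed.

Lemma relation_support (t : seq (M * X)) (l : seq (R * (M * seq (R * X)))) :
  exists2 Y : seq X, uniq Y & (forall p, p \in t -> p.2 \in Y) /\
    (forall q w, q \in l -> w \in q.2.2 -> w.2 \in Y).
Proof.
exists (undup ([seq p.2 | p <- t] ++ flatten [seq [seq w.2 | w <- q.2.2] | q <- l])).
  exact: undup_uniq.
split=> [p pt | q w ql wq]; rewrite mem_undup mem_cat; first by rewrite (map_f snd).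
apply/orP; right; apply/flattenP; exists [seq w.2 | w <- q.2.2]; last exact: (map_f snd).
exact: (map_f (fun q => [seq w.2 | w <- q.2.2])).
Qed.

Lemma scale_relation_vec r (q : M * seq (R * X)) :
  r *: relation_vec q = relation_vec (r *: q.1, q.2).
Proof.
rewrite /relation_vec /formal !big_map scaler_sumr; apply: eq_bigr => w _.
apply/funext => y; rewrite /single !fctE /=.
by case: (w.2 == y); rewrite ?scaler0 // !scalerA mulrC.
Qed.

Lemma sum_tmul_relations (t : seq (M * X)) (l : seq (R * (M * seq (R * X)))) (z : X -> A) :
  formal t = \sum_(q <- l) q.1 *: relation_vec q.2 ->
  \sum_(p <- t) tmul p.1 (z p.2) =
    \sum_(q <- l) tmul (q.1 *: q.2.1) (\sum_(w <- q.2.2) w.1 *: z w.2).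
Proof.
move=> tl; have [Y uY [tY lY]] := relation_support t l.
rewrite -(sum_tmul_formal z uY tY) tl.
under eq_bigr do rewrite fct_sumE tmul_suml.
rewrite exchange_big; apply: eq_big_seq => q ql /=.
under eq_bigr do rewrite scale_relation_vec.
rewrite (sum_tmul_formal z uY); last by move=> _ /mapP[w wq ->]; apply: lY wq.
by rewrite big_map tmul_sumr; apply: eq_bigr => w _; rewrite tmulZ.
Qed.

End FormalEvaluation.

(** * The equivalent conditions *)

Section Characterizations.
Variables (R : comPzRingType) (A B C : lmodType R) (f : {linear A -> B})
  (f' : {linear B -> C}).

Definition system_pure (s : R) :=
  forall (n m : nat) (a : 'I_n -> A) (r : 'I_n -> 'I_m -> R),
    (exists x : 'I_m -> B, forall i, f (a i) = \sum_(j < m) r i j *: x j) ->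
    (exists y : 'I_m -> A, forall i, s *: a i = \sum_(j < m) r i j *: y j).

Definition extension_pure (s : R) :=
  forall (F K : lmodType R) (i : {linear K -> F}),
    fg_free F -> fin_generated K -> injective i ->
    forall (alpha : {linear K -> A}) (beta : {linear F -> B}),
      (forall x, f (alpha x) = beta (i x)) ->
      exists eta : {linear F -> A}, forall x, s *: alpha x = eta (i x).

Definition hom_exact_wrt (s : R) (N : lmodType R) :=
  (forall h : {linear N -> A}, (forall x, f (h x) = 0) -> forall x, s *: h x = 0) /\
  (forall g : {linear N -> B}, (forall x, f' (g x) = 0) ->
     exists h : {linear N -> A}, forall x, f (h x) = s *: g x) /\
  (forall (h : {linear N -> A}) x, f' (s *: f (h x)) = 0) /\
  (forall k : {linear N -> C}, exists g : {linear N -> B}, forall x, f' (g x) = s *: k x).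

Lemma system_pure_elements s (Y : seq B) (eqs : seq (A * seq (R * B))) :
  system_pure s -> uniq Y -> (forall e w, e \in eqs -> w \in e.2 -> w.2 \in Y) ->
  (forall e, e \in eqs -> f e.1 = \sum_(w <- e.2) w.1 *: w.2) ->
  exists z : B -> A, forall e, e \in eqs -> s *: e.1 = \sum_(w <- e.2) w.1 *: z w.2.
Proof.
move=> pure uY eqsY eqsE; pose e0 : A * seq (R * B) := (0, [::]).
pose coef i (j : 'I_(size Y)) := \sum_(w <- (nth e0 eqs i).2 | w.2 == nth 0 Y j) w.1.
have sum_coef (i : nat) (V : lmodType R) (x : B -> V) : (i < size eqs)%N ->
    \sum_(j < size Y) coef i j *: x (nth 0 Y j) = \sum_(w <- (nth e0 eqs i).2) w.1 *: x w.2.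
  move=> ilt; rewrite -(sum_collect_coef x uY) => [|w]; last exact/eqsY/mem_nth.
  by rewrite [RHS](big_nth 0) big_mkord.
have [|y yE] := pure (size eqs) (size Y) (fun i => (nth e0 eqs i).1) (fun i => coef i).
  by exists (fun j => nth 0 Y j) => i; rewrite (sum_coef i _ id) //; apply/eqsE/mem_nth.
pose z b := if insub (index b Y) is Some j then y j else 0.
exists z => e /(nthP e0)[i ilt <-]; rewrite -(sum_coef i _ z) // (yE (Ordinal ilt)).
by apply: eq_bigr => j _; rewrite /z index_uniq // valK.
Qed.

Lemma system_pure_tens_inj s (M : lmodType R) (u : seq (M * A)) :
  system_pure s -> tens_eq (tens_map f u) [::] -> tens_eq (tens_scale s u) [::].
Proof.
move=> pure /formal_relations[l l_rel fuE].
have [Y uY [fuY lY]] := relation_support (tens_map f u) l.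
pose eqs := [seq (p.2, [:: (1, f p.2)]) | p <- u] ++ [seq (0, q.2.2) | q <- l].
have [||z zE] := system_pure_elements (eqs := eqs) pure uY.
- move=> e w; rewrite mem_cat => /orP[] /mapP[p pin ->] /=; last exact: lY.
  rewrite inE => /eqP ->; apply: (fuY (p.1, f p.2)).
  exact: (map_f (fun p => (p.1, f p.2))).
- move=> e; rewrite mem_cat => /orP[] /mapP[p pin ->] /=; first by rewrite big_seq1 scale1r.
  by rewrite linear0 (l_rel _ pin).
have z_u p : p \in u -> s *: p.2 = z (f p.2).
  move=> pu; have /= := zE (p.2, [:: (1, f p.2)]); rewrite big_seq1 scale1r; apply.
  by rewrite mem_cat (map_f (fun p => (p.2, [:: (1, f p.2)])) pu).
have z_l q : q \in l -> \sum_(w <- q.2.2) w.1 *: z w.2 = 0.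
  move=> ql; have /= := zE (0, q.2.2); rewrite scaler0 => <- //.
  by rewrite mem_cat (map_f (fun q => (0, q.2.2)) ql) orbT.
apply/tsum_eqP; rewrite tsumE tsum_nil big_map.
transitivity (\sum_(p <- tens_map f u) tmul p.1 (z p.2)).
  by rewrite big_map; apply: eq_big_seq => p pu /=; rewrite tmulZ z_u.
by rewrite (sum_tmul_relations z fuE) big1_seq // => q /andP[_ ql]; rewrite z_l // tmul0r.
Qed.

Lemma extension_pure_of_system_pure s : system_pure s -> extension_pure s.
Proof.
move=> pure F K i [n [e [e_span e_free]]] [p [k k_span]] _ alpha beta fab.
have [r rE] := choice (fun q => e_span (i (k q))).
have [|y yE] := pure p n (alpha \o k) r.
  by exists (beta \o e) => q /=; rewrite fab rE linear_lincomb.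
have [eta etaE] := free_lift e_span e_free y.
exists eta => x; have [c ->] := k_span x.
rewrite !linear_lincomb; apply: eq_bigr => q _; congr (_ *: _).
by rewrite [LHS]yE rE linear_lincomb; apply: eq_bigr => j _; rewrite etaE.
Qed.

Section ExactSequence.
Variables (s0 : R) (hex : short_uS_exact_wrt s0 f f').

Lemma exact_ker_f a : f a = 0 -> s0 *: a = 0.
Proof. by case: hex => + _; apply. Qed.

Lemma exact_ker_f' b : f' b = 0 -> exists a, f a = s0 *: b.
Proof. by case: hex => _ [[+ _] _]; apply. Qed.

Lemma exact_im_f a : f' (s0 *: f a) = 0.
Proof. by case: hex => _ [[_ +] _]; apply. Qed.

Lemma exact_im_f' c : exists b, f' b = s0 *: c.
Proof. by case: hex => _ [_ +]; apply. Qed.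

Lemma system_pure_of_extension_pure s : extension_pure s -> system_pure (s * s0).
Proof.
move=> ext n m a r [x xE].
pose Rm := \matrix_(i < n, j < m) r i j.
pose iota : {linear 'rV[R]_n -> 'rV[R]_m} := mulmxr Rm.
have [ib [ib_inj ibE]] := quot_ker_lift iota.
have f_comb c : f (row_comb a c) = row_comb x (iota c).
  rewrite [RHS]row_comb_mulmx !row_combE linear_lincomb.
  by apply: eq_bigr => i _; rewrite xE; congr (_ *: _); apply: eq_bigr => j _; rewrite mxE.
have [|al alE] := @quot_lift _ _ (ker_submod iota) _ (row_comb (fun i => s0 *: a i)).
  by move=> c c0; rewrite row_combZ exact_ker_f // f_comb (c0 : iota c = 0) linear0.
pose be := row_comb (fun j => s0 *: x j).
have [|eta etaE] := ext _ _ ib (fg_free_rV _ _) (fin_generated_quot_rV _) ib_inj al be.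
  move=> q; rewrite -[q]quot_proj_repr alE ibE row_combZ linearZ_LR f_comb.
  by rewrite /be row_combZ.
exists (fun j => eta (delta_mx 0 j)) => i.
rewrite -scalerA -(row_comb_delta (fun i => s0 *: a i)) -alE etaE ibE /=.
by rewrite delta_mulmx linear_lincomb; apply: eq_bigr => j _; rewrite mxE.
Qed.

Section FinitelyPresented.
Variables (N : lmodType R) (n k : nat) (gam : 'I_n -> N) (rel : 'I_k -> 'I_n -> R).
Hypotheses (gam_span : forall x, exists c : 'I_n -> R, x = \sum_(i < n) c i *: gam i)
  (gam_rel : forall l, \sum_(i < n) rel l i *: gam i = 0)
  (rel_span : forall c : 'I_n -> R, \sum_(i < n) c i *: gam i = 0 ->
     exists d : 'I_k -> R, forall i, c i = \sum_(l < k) d l * rel l i).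

Lemma linear_rel (W : lmodType R) (h : {linear N -> W}) l : \sum_i rel l i *: h (gam i) = 0.
Proof. by rewrite -linear_lincomb gam_rel linear0. Qed.

Lemma hom_lift_f t (g : {linear N -> B}) : (forall x, f' (g x) = 0) ->
  exists h : {linear N -> A}, forall x, f (h x) = (t * (s0 * s0)) *: g x.
Proof.
move=> f'g0; have [a aE] := choice (fun i => exact_ker_f' (f'g0 (gam i))).
have [|h hE] := presentation_lift gam_span rel_span (z := fun i => (t * s0) *: a i).
  move=> l; under eq_bigr do rewrite scalerAC.
  rewrite -scaler_sumr -scalerA exact_ker_f ?scaler0 //.
  rewrite linear_lincomb; under eq_bigr do rewrite aE scalerAC.
  by rewrite -scaler_sumr linear_rel scaler0.
exists h => x; have [c ->] := gam_span x.
rewrite !linear_lincomb; apply: eq_bigr => i _ /=; congr (_ *: _).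
by rewrite hE linearZ_LR aE scalerA mulrA.
Qed.

Lemma hom_lift_f' s (k' : {linear N -> C}) : system_pure s ->
  exists g : {linear N -> B}, forall x, f' (g x) = (s0 * (s0 * (s0 * s))) *: k' x.
Proof.
move=> pure; have [b bE] := choice (fun i => exact_im_f' (k' (gam i))).
have rel_b l : f' (\sum_i rel l i *: b i) = 0.
  rewrite linear_lincomb; under eq_bigr do rewrite bE scalerAC.
  by rewrite -scaler_sumr linear_rel scaler0.
have [a aE] := choice (fun l => exact_ker_f' (rel_b l)).
(* The lifts [b i] satisfy the relations only up to the image of [f]; the
   correction is a system solvable in B. *)
have [|y yE] := pure k n a rel.
  exists (fun i => s0 *: b i) => l; rewrite aE scaler_sumr.
  by apply: eq_bigr => i _; rewrite scalerAC.
have [|g gE] := presentation_lift gam_span rel_span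
    (z := fun i => s0 *: ((s * s0) *: b i - f (y i))).
  move=> l.
  transitivity (s0 *: ((s * s0) *: \sum_i rel l i *: b i - \sum_i rel l i *: f (y i))).
    rewrite scalerBr !scaler_sumr -sumrB; apply: eq_bigr => i _.
    by rewrite !scalerBr !scalerA; congr (_ *: _ - _ *: _); ring.
  by rewrite -(linear_lincomb f) -yE linearZ_LR aE scalerA subrr scaler0.
exists g => x; have [c ->] := gam_span x.
rewrite !linear_lincomb; apply: eq_bigr => i _ /=; congr (_ *: _).
rewrite gE scalerBr linearB exact_im_f subr0 !(linearZ_LR f') bE !scalerA.
by congr (_ *: _); ring.
Qed.

End FinitelyPresented.

Lemma hom_exact_of_system_pure s : system_pure s ->
  forall N, fin_presented N -> hom_exact_wrt (s0 * (s0 * (s0 * s))) N.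
Proof.
move=> pure N [n [gam [gam_span [k [rel [gam_rel rel_span]]]]]].
have -> : s0 * (s0 * (s0 * s)) = (s * (s0 * s0)) * s0 by ring.
split; [|split; [|split]].
- by move=> h fh0 x; rewrite -scalerA exact_ker_f ?fh0 ?scaler0.
- move=> g /(hom_lift_f gam_span gam_rel rel_span (s * s0))[h hE].
  by exists h => x; rewrite hE; congr (_ *: _); ring.
- by move=> h x; rewrite -scalerA linearZ_LR exact_im_f scaler0.
- move=> k'; have [g gE] := hom_lift_f' gam_span gam_rel rel_span k' pure.
  by exists g => x; rewrite gE; congr (_ *: _); ring.
Qed.

Lemma system_pure_of_hom_exact s :
  (forall N, fin_presented N -> hom_exact_wrt s N) -> system_pure (s0 * (s0 * (s * s0))).
Proof.
move=> hom n m a r [x xE]; pose Rm := \matrix_(i < n, j < m) r i j.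
have [|k kE] := @quot_lift _ _ (image_submod (mulmxr Rm : {linear 'rV[R]_n -> 'rV[R]_m})) _
    (row_comb (fun j => f' (s0 *: x j))).
  move=> _ [d ->]; rewrite -[_ d]/(d *m Rm) row_comb_mulmx row_combE big1 // => i _.
  rewrite -(linear_lincomb f') -(linear_lincomb (GRing.scale s0 : {linear B -> B})) /=.
  by under eq_bigr do rewrite mxE; rewrite -xE exact_im_f scaler0.
have [g gE] := (hom _ (fin_presented_coker Rm)).2.2.2 k.
have g_ker j : f' ((s * s0) *: x j - g (coker_gen Rm j)) = 0.
  by rewrite linearB gE kE row_comb_delta !(linearZ_LR f') scalerA subrr.
have [z zE] := choice (fun j => exact_ker_f' (g_ker j)).
exists (fun j => s0 *: z j) => i.
suff /exact_ker_f : f (\sum_j r i j *: z j - (s0 * (s * s0)) *: a i) = 0.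
  rewrite scalerBr scalerA => /eqP; rewrite subr_eq0 => /eqP <-.
  by rewrite scaler_sumr; apply: eq_bigr => j _; rewrite scalerAC.
have rel : \sum_j r i j *: coker_gen Rm j = 0.
  by rewrite -[RHS](coker_rel Rm i); apply: eq_bigr => j _; rewrite mxE.
rewrite linearB linearZ_LR xE linear_lincomb.
have -> : \sum_j r i j *: f (z j) =
    (s0 * (s * s0)) *: \sum_j r i j *: x j - s0 *: g (\sum_j r i j *: coker_gen Rm j).
  rewrite (linear_lincomb g) !scaler_sumr -sumrB; apply: eq_bigr => j _.
  by rewrite zE !scalerBr !scalerA; congr (_ *: _ - _ *: _); ring.
by rewrite rel linear0 scaler0 subr0 subrr.
Qed.

Lemma tens_exact_middle (M : lmodType R) (t : seq (M * B)) :
  tens_eq (tens_map f' t) [::] ->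
  exists u : seq (M * A), tens_eq (tens_map f u) (tens_scale (s0 * s0) t).
Proof.
move=> /formal_relations[l l_rel f'tE].
have [bp bpE] := choice exact_im_f'.
have al_ker b : f' (s0 *: b - bp (f' b)) = 0.
  by rewrite linearB (linearZ_LR f') bpE subrr.
have [al alE] := choice (fun b => exact_ker_f' (al_ker b)).
have be_ex (q : R * (M * seq (R * C))) :
    exists a, is_relation q.2 -> f a = s0 *: \sum_(w <- q.2.2) w.1 *: bp w.2.
  case: (pselect (is_relation q.2)) => [rel | nrel]; last by exists 0 => /nrel.
  suff /exact_ker_f' [a aE] : f' (\sum_(w <- q.2.2) w.1 *: bp w.2) = 0 by exists a.
  rewrite linear_sum; under eq_bigr do rewrite linearZ_LR bpE scalerAC.
  by rewrite -scaler_sumr rel scaler0.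
have [be beE] := choice be_ex.
exists ([seq (p.1, al p.2) | p <- t] ++ [seq (q.1 *: q.2.1, be q) | q <- l]).
apply/tsum_eqP; rewrite /tens_map map_cat tsum_cat !tsumE !big_map /=.
have := sum_tmul_relations (fun c => s0 *: bp c) f'tE; rewrite big_map /= => relE.
under eq_bigr do rewrite alE scalerBr tmulBr scalerA.
rewrite sumrB relE -addrA [X in _ + X](_ : _ = 0) ?addr0.
  by apply: eq_bigr => p _; rewrite tmulZ.
rewrite addrC; apply/eqP; rewrite subr_eq0; apply/eqP/eq_big_seq => q ql.
rewrite beE ?scaler_sumr; last exact: l_rel ql.
by congr tmul; apply: eq_bigr => w _; rewrite scalerAC.
Qed.

Lemma tens_pure_of_system_pure s (M : lmodType R) : system_pure s ->
  tens_short_uS_exact_wrt (s * (s0 * s0)) M f f'.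
Proof.
move=> pure; split; [|split; [|split]].
- move=> u /(system_pure_tens_inj pure)/(tens_eq_scale (s0 * s0)).
  by rewrite tens_scaleA mulrC.
- move=> t /tens_exact_middle[u uE]; exists (tens_scale s u).
  by rewrite tens_map_scale -tens_scaleA; apply: tens_eq_scale.
- move=> u; apply/tsum_eqP; rewrite tsumE /tens_map /tens_scale !big_map big1 // => p _ /=.
  rewrite tmulZ -(linearZ_LR f') mulrA -scalerA (linearZ_LR f') exact_im_f scaler0.
  exact: tmul0r.
- move=> w; have [bp bpE] := choice exact_im_f'.
  exists [seq ((s * s0) *: p.1, bp p.2) | p <- w].
  apply/tsum_eqP; rewrite !tsumE /tens_map /tens_scale !big_map; apply: eq_bigr => p _ /=.
  by rewrite bpE -tmulZ scalerA; congr (tmul (_ *: _) _); ring.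
Qed.

End ExactSequence.

End Characterizations.

(** * The universal module of finite systems *)

Section UniversalModule.
Variable R : comPzRingType.
Local Notation mat := (nat -> nat -> R).
Local Notation ufree := (mat * nat -> R^o).

Definition unit_vec (x : mat * nat) : ufree := fun y => (x == y)%:R.

(* A system is encoded by its coefficient matrix padded with zeros;
   [column_rel (sig, j)] is the infinite sum [\sum_i sig i j *: unit_vec (sig, i)]. *)
Definition column_rel (g : mat * nat) : ufree :=
  fun y => if g.1 == y.1 then g.1 y.2 g.2 else 0.

Definition column_rels := span_submod (fun _ => True) column_rel.

Definition umod := quotmod column_rels.

Definition unit_class (x : mat * nat) : umod := quot_proj _ (unit_vec x).

Definition pad_matrix n m (r : 'I_n -> 'I_m -> R) : mat :=
  fun i j => if insub i is Some i' then if insub j is Some j' then r i' j' else 0 else 0.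

Lemma pad_matrixE n m r (i : 'I_n) (j : 'I_m) : pad_matrix r i j = r i j.
Proof. by rewrite /pad_matrix !valK. Qed.

Lemma pad_matrix0 n m r i j : (m <= j)%N -> @pad_matrix n m r i j = 0.
Proof. by move=> mj; rewrite /pad_matrix; case: insub => // i'; rewrite insubF // ltnNge mj. Qed.

Lemma column_rel_pad n m r (j : 'I_m) :
  column_rel (pad_matrix r, val j) = \sum_(i < n) r i j *: unit_vec (pad_matrix r, val i).
Proof.
apply/funext => -[tau k]; rewrite fct_sumE /column_rel /=.
have [<- | ne] := eqVneq (pad_matrix r) tau; last first.
  by apply/esym/big1 => i _; rewrite fctE /unit_vec xpair_eqE (negbTE ne) andFb scaler0.
transitivity (\sum_(i < n) if val i == k then r i j else 0).
  by rewrite sum_val_eq /pad_matrix valK.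
apply: eq_bigr => i _; rewrite fctE /unit_vec xpair_eqE eqxx /=.
by case: (val i == k); [apply/esym/mulr1 | apply/esym/scaler0].
Qed.

Variable A : lmodType R.

Lemma fscale_is_linear (b : A) r (psi psi' : ufree) :
  (fun y => (r *: psi + psi') y *: b) = r *: (fun y => psi y *: b) + (fun y => psi' y *: b).
Proof. by apply/funext => y; rewrite !fctE scalerDl scalerA. Qed.

Definition fscale (b : A) : {linear ufree -> (mat * nat -> A)} := linear_of (fscale_is_linear b).

Lemma fscaleE b psi y : fscale b psi y = psi y *: b.
Proof. by []. Qed.

Definition column_span := span_submod (fun _ => True)
  (fun p : (mat * nat) * A => fscale p.2 (column_rel p.1)).

Lemma column_span_fscale b psi : column_rels psi -> column_span (fscale b psi).
Proof.
move=> [l _ ->]; exists [seq (p.1, (p.2, b)) | p <- l] => //.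
by rewrite linear_sum big_map; apply: eq_bigr => p _; rewrite linearZ_LR.
Qed.

Lemma umod_tens_eq0 (t : seq (umod * A)) : tens_eq t [::] ->
  column_span (\sum_(p <- t) fscale p.2 (repr p.1)).
Proof.
apply: (@tens_eq0_invariant R umod A _ column_span (fun q b => fscale b (repr q)))
  => [q q' b | q b b' | r q b | b].
- rewrite -linearD -linearB; apply/column_span_fscale/quot_proj_repr_sub.
  by rewrite linearD !quot_proj_repr.
- have -> : fscale (b + b') (repr q) = fscale b (repr q) + fscale b' (repr q).
    by apply/funext => y; rewrite fctE !fscaleE scalerDr.
  by rewrite subrr; apply: submod0.
- have -> : fscale (r *: b) (repr q) = fscale b (r *: repr q).
    by apply/funext => y; rewrite !fscaleE fctE /= scalerA mulrC.
  rewrite -linearB; apply/column_span_fscale/quot_proj_repr_sub.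
  by rewrite linearZ_LR quot_proj_repr.
- rewrite -[fscale b _]subr0 -(linear0 (fscale b)) -linearB.
  by apply/column_span_fscale/quot_proj_repr_sub; rewrite linear0.
Qed.

Lemma column_span_eval (phi : mat * nat -> A) (sig : mat) m :
  column_span phi -> (forall i j, (m <= j)%N -> sig i j = 0) ->
  exists y : 'I_m -> A, forall i, phi (sig, i) = \sum_(j < m) sig i j *: y j.
Proof.
move=> [l _ ->] sig0.
exists (fun j => \sum_(p <- l | p.2.1 == (sig, val j)) p.1 *: p.2.2) => i.
rewrite fct_sumE; under [RHS]eq_bigr do rewrite scaler_sumr big_mkcond.
rewrite [RHS]exchange_big; apply: eq_bigr => -[c [[tau k] b]] _ /=.
rewrite fctE /= /column_rel /=.
have [-> | ne] := eqVneq tau sig; last first.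
  rewrite scale0r scaler0 big1 // => j _.
  by rewrite xpair_eqE (negbTE ne).
have [km | mk] := ltnP k m; last first.
  rewrite sig0 // scale0r scaler0 big1 // => j _.
  by rewrite xpair_eqE eqxx /= gtn_eqF // (leq_trans (ltn_ord j)).
rewrite (bigD1 (Ordinal km)) //= xpair_eqE !eqxx /= big1 ?addr0 => [|j /negbTE jk].
  by rewrite scalerAC.
rewrite xpair_eqE eqxx /=; case: eqP => // kj.
by move: jk; rewrite -(inj_eq val_inj) /= kj eqxx.
Qed.

Lemma sum_fscale_unit_vec n (sig : mat) s (a : 'I_n -> A) (i0 : 'I_n) :
  (\sum_i fscale (a i) (s *: unit_vec (sig, val i))) (sig, val i0) = s *: a i0.
Proof.
rewrite fct_sumE -[RHS]/(if Some i0 is Some i then s *: a i else 0) -valK -sum_val_eq.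
apply: eq_bigr => i _; rewrite fscaleE fctE /unit_vec xpair_eqE eqxx /=.
case: (val i == val i0); first by rewrite -[X in X *: _ = _]/(s * 1) mulr1.
by rewrite -[X in X *: _ = _]/(s * 0) mulr0 scale0r.
Qed.

Lemma umod_system_tens0 (B : lmodType R) (f : {linear A -> B}) n m (a : 'I_n -> A)
  (r : 'I_n -> 'I_m -> R) (x : 'I_m -> B) :
  (forall i, f (a i) = \sum_j r i j *: x j) ->
  tens_eq (tens_map f [seq (unit_class (pad_matrix r, val i), a i) | i <- index_enum 'I_n])
    [::].
Proof.
move=> xE; apply/tsum_eqP; rewrite tsumE tsum_nil !big_map.
under eq_bigr do rewrite xE tmul_sumr.
rewrite exchange_big big1 // => j _; under eq_bigr do rewrite -tmulZ.
rewrite -tmul_suml /unit_class -(linear_lincomb (quot_proj _)) -column_rel_pad.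
suff -> : quot_proj column_rels (column_rel (pad_matrix r, val j)) = 0 by apply: tmul0l.
by apply/quot_proj_eq0; rewrite -[column_rel _]scale1r; apply: spanned_gen.
Qed.

End UniversalModule.

Lemma system_pure_of_tens_pure (R : comPzRingType) (S : {pred R}) (A B C : lmodType R)
  (f : {linear A -> B}) (f' : {linear B -> C}) :
  uS_pure S f f' -> exists2 s, s \in S & system_pure f s.
Proof.
(* A single module for all systems, so that [s] does not depend on the system. *)
move=> pure; have [s sS [s_inj _]] := pure (umod R).
exists s => // n m a r [x /umod_system_tens0/s_inj/umod_tens_eq0].
rewrite !big_map => inv.
pose v (i : 'I_n) := unit_vec (pad_matrix r, val i).
have : column_span A (\sum_i fscale (a i) (s *: v i)).
  pose e (i : 'I_n) := unit_class (pad_matrix r, val i).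
  have -> : \sum_i fscale (a i) (s *: v i) =
      \sum_i fscale (a i) (repr (s *: e i)) - \sum_i fscale (a i) (repr (s *: e i) - s *: v i).
    by rewrite -sumrB; apply: eq_bigr => i _; rewrite linearB opprB addrC subrK.
  apply: submodB inv _; apply: submod_sum => i.
  by apply/column_span_fscale/quot_proj_repr_sub; rewrite linearZ_LR.
move/column_span_eval/(_ (@pad_matrix0 _ _ _ r)) => [y yE]; exists y => i0.
by rewrite -(sum_fscale_unit_vec (pad_matrix r)) yE; apply: eq_bigr => j _; rewrite pad_matrixE.
Qed.

Theorem theorem2p2 (R : comPzRingType) (S : {pred R}) (hS : mult_subset S)
  (A B C : lmodType R) (f : {linear A -> B}) (f' : {linear B -> C})
  (hex : exists2 s, s \in S & short_uS_exact_wrt s f f') :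
  [<->
   (* (1) *)
   uS_pure S f f';
   (* (2) *)
   exists2 s, s \in S &
     forall (n m : nat) (a : 'I_n -> A) (r : 'I_n -> 'I_m -> R),
       (exists x : 'I_m -> B, forall i, f (a i) = \sum_(j < m) r i j *: x j) ->
       (exists y : 'I_m -> A, forall i, s *: a i = \sum_(j < m) r i j *: y j);
   (* (3) *)
   exists2 s, s \in S &
     forall (F K : lmodType R) (i : {linear K -> F}),
       fg_free F -> fin_generated K -> injective i ->
       forall (alpha : {linear K -> A}) (beta : {linear F -> B}),
         (forall x, f (alpha x) = beta (i x)) ->
         exists eta : {linear F -> A}, forall x, s *: alpha x = eta (i x);
   (* (4) *)
   exists2 s, s \in S &
     forall N : lmodType R, fin_presented N ->
       (* exactness at Hom(N,A) *)
       (forall h : {linear N -> A}, (forall x, f (h x) = 0) ->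
          forall x, s *: h x = 0) /\
       (* exactness at Hom(N,B) *)
       (forall g : {linear N -> B}, (forall x, f' (g x) = 0) ->
          exists h : {linear N -> A}, forall x, f (h x) = s *: g x) /\
       (forall (h : {linear N -> A}) x, f' (s *: f (h x)) = 0) /\
       (* exactness at Hom(N,C) *)
       (forall k : {linear N -> C}, exists g : {linear N -> B},
          forall x, f' (g x) = s *: k x)].
Proof.
case: hex => s0 s0S hex0; have [_ mulS] := hS.
tfae.
- exact: system_pure_of_tens_pure.
- by case=> s sS /extension_pure_of_system_pure; exists s.
- case=> s sS /(system_pure_of_extension_pure hex0)/(hom_exact_of_system_pure hex0) hom.
  by exists (s0 * (s0 * (s0 * (s * s0)))); rewrite ?mulS.
- case=> s sS /(system_pure_of_hom_exact hex0)/(tens_pure_of_system_pure hex0) pure M.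
  by exists (s0 * (s0 * (s * s0)) * (s0 * s0)); rewrite ?mulS.
Qed.
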